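(* Let $H=(V,E)$, $H_1=(V_1,E_1)$, $H_2=(V_2,E_2)$ be hypergraphs with $V=V_1\cup V_2$ and $E=E_1\cup E_2$. If $V_1\cap V_2\in (L(V_1)\cup E_1)\cap(L(V_2)\cup E_2)$, then \[\mathrm{MC}^H=\overline{\mathrm{MC}}^{H_1}\cap\overline{\mathrm{MC}}^{H_2},\qquad\text{where } \overline{\mathrm{MC}}^{H_k}=\{w\in\mathbb{R}^{\mathcal{J}^H}: \operatorname{proj}_{\mathcal{J}^{H_k}}w\in\mathrm{MC}^{H_k}\},\ k=1,2.\]
   Context: Let $n$ be a positive integer, $[n]=\{1,\dots,n\}$. A hypergraph $H=(V,E)$ here has as vertex set $V$ a family of pairwise disjoint subsets of $[n]$, each of cardinality at least $2$, and hyperedge set $E$ consisting of subsets $e\subseteq V$ with $|e|\ge 2$. Write $L(V)=\{\{I\}: I\in V\}$. For a nonempty $e\subseteq V$, $\mathcal{J}^e$ denotes the family of sets $J\subseteq \bigcup_{I\in e} I$ with $|J\cap I|=1$ for every $I\in e$. Let $\mathcal{J}^H=\bigcup_{e\in L(V)\cup E}\mathcal{J}^e$ (so $\mathcal{J}^{H_k}\subseteq\mathcal{J}^H$). For $w\in\mathbb{R}^{\mathcal{J}^H}$ write $w_i=w_{\{i\}}$ and $w(A)=\sum_{i\in A}w_i$. Let $\mathscr{S}^H=\{w\in\{0,1\}^{\mathcal{J}^H}: w(I)=1\ \forall I\in V;\ w_J=\prod_{i\in J}w_i\ \forall J\in\mathcal{J}^H, |J|>1\}$ and $\mathrm{MC}^H=\operatorname{conv}\mathscr{S}^H$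 (analogously for $H_1,H_2$). $\operatorname{proj}_{S'}$ extracts the coordinates indexed by $S'$. *)

From HB Require Import structures.
From mathcomp Require Import all_boot all_order all_algebra.
From mathcomp Require Import reals.
Set Implicit Arguments. Unset Strict Implicit. Unset Printing Implicit Defensive.
Import Order.TTheory GRing.Theory Num.Theory.
Local Open Scope ring_scope.

(* Ground set [n] is modelled by 'I_n = {0,...,n-1}.
   Vertices: subsets of 'I_n; a vertex set V : {set {set 'I_n}};
   a hyperedge is a set of vertices, E : {set {set {set 'I_n}}}. *)

Definition is_hypergraph (n : nat) (V : {set {set 'I_n}})
    (E : {set {set {set 'I_n}}}) : Prop :=
  (forall I, I \in V -> (2 <= #|I|)%N) /\
  (forall I J, I \in V -> J \in V -> I != J -> [disjoint I & J]) /\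
  (forall e, e \in E -> e \subset V /\ (2 <= #|e|)%N).

Definition Lv (n : nat) (V : {set {set 'I_n}}) : {set {set {set 'I_n}}} :=
  [set [set I] | I in V].

Definition Je (n : nat) (e : {set {set 'I_n}}) : {set {set 'I_n}} :=
  [set J : {set 'I_n} | (J \subset \bigcup_(I in e) I) &&
                        [forall I in e, #|J :&: I| == 1%N]].

Definition JH (n : nat) (V : {set {set 'I_n}}) (E : {set {set {set 'I_n}}})
    : {set {set 'I_n}} :=
  \bigcup_(e in Lv V :|: E) Je e.

(* A vector of R^{J^H} is represented by a function {set 'I_n} -> R that
   vanishes outside J^H; w_i := w {i}. *)
Definition supported (R : realType) (n : nat) (V : {set {set 'I_n}})
    (E : {set {set {set 'I_n}}}) (w : {set 'I_n} -> R) : Prop :=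
  forall J, J \notin JH V E -> w J = 0.

Definition SH (R : realType) (n : nat) (V : {set {set 'I_n}})
    (E : {set {set {set 'I_n}}}) (w : {set 'I_n} -> R) : Prop :=
  supported V E w /\
  (forall J, J \in JH V E -> w J = 0 \/ w J = 1) /\
  (forall I, I \in V -> \sum_(i in I) w [set i] = 1) /\
  (forall J, J \in JH V E -> (1 < #|J|)%N -> w J = \prod_(i in J) w [set i]).

Definition conv (R : realType) (T : Type) (P : (T -> R) -> Prop)
    (w : T -> R) : Prop :=
  exists (k : nat) (lam : 'I_k -> R) (p : 'I_k -> T -> R),
    (forall i, 0 <= lam i) /\ \sum_(i < k) lam i = 1 /\
    (forall i, P (p i)) /\
    (forall x, w x = \sum_(i < k) lam i * p i x).

Definition MC (R : realType) (n : nat) (V : {set {set 'I_n}})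
    (E : {set {set {set 'I_n}}}) (w : {set 'I_n} -> R) : Prop :=
  conv (@SH R n V E) w.

Definition proj (R : realType) (n : nat) (V : {set {set 'I_n}})
    (E : {set {set {set 'I_n}}}) (w : {set 'I_n} -> R) : {set 'I_n} -> R :=
  fun J => if J \in JH V E then w J else 0.

From HB Require Import structures.
From mathcomp Require Import all_boot all_order all_algebra.
From mathcomp Require Import reals.
Import Order.TTheory GRing.Theory Num.Theory.
Local Open Scope ring_scope.
Set Implicit Arguments. Unset Strict Implicit.

(* Projecting a 0/1 point of S^H onto J^{H_k} gives a 0/1 point of S^{H_k}, so
   only the gluing direction needs work.  Decompose proj w as sum_a lam_a p_a
   over S^{H_1} and as sum_b mu_b q_b over S^{H_2}.  Since e0 = V1 :&: V2 is an
   edge of both hypergraphs, the coordinates J^{e0} are shared, and each 0/1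
   point p selects exactly one monomial J(p) of J^{e0} (its chosen element in
   every vertex of e0); a point q takes the value 1 on J(p) iff p and q choose
   the same elements on e0.  Thus w(J(p_a)) is both the lam-mass of the p's and
   the mu-mass of the q's compatible with p_a on e0.  Pairing p_a with each
   compatible q_b with weight lam_a mu_b / w(J(p_a)), and gluing them into the
   0/1 point that follows p_a on the vertices of V1 and q_b elsewhere, yields a
   convex decomposition of w over S^H. *)

Section IndexSets.
Variable n : nat.
Implicit Types (V : {set {set 'I_n}}) (E : {set {set {set 'I_n}}})
  (e : {set {set 'I_n}}) (I J : {set 'I_n}) (i : 'I_n).

Lemma hyperedge_subset V E e :
  is_hypergraph V E -> e \in Lv V :|: E -> e \subset V.
Proof.
move=> [_ [_ HE]]; rewrite inE => /orP[/imsetP[I IV ->]|/HE[]//].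
by rewrite sub1set.
Qed.

Lemma hyperedge_neq0 V E e :
  is_hypergraph V E -> e \in Lv V :|: E -> e != set0.
Proof.
move=> [_ [_ HE]]; rewrite inE => /orP[/imsetP[I _ ->]|/HE[_ c2]].
  by apply/set0Pn; exists I; rewrite set11.
by rewrite -card_gt0; apply: leq_trans c2.
Qed.

Lemma Je_sub_JH V E e : e \in Lv V :|: E -> Je e \subset JH V E.
Proof. exact: bigcup_sup. Qed.

Lemma JH_subset V1 E1 V E :
  V1 \subset V -> E1 \subset E -> JH V1 E1 \subset JH V E.
Proof.
move=> sV sE; apply/bigcupsP => e he; apply: Je_sub_JH.
by move: he; apply/subsetP; rewrite setUSS // imsetS.
Qed.

Lemma JH_setU V1 E1 V2 E2 :
  JH (V1 :|: V2) (E1 :|: E2) = JH V1 E1 :|: JH V2 E2.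
Proof. by rewrite /JH /Lv imsetU setUACA bigcup_setU. Qed.

Lemma JH_neq0 V E J : is_hypergraph V E -> J \in JH V E -> J != set0.
Proof.
move=> hH /bigcupP[e he]; have /set0Pn[I Ie] := hyperedge_neq0 hH he.
rewrite inE => /andP[_ /forall_inP/(_ I Ie)/cards1P[i iJI]].
by apply/set0Pn; exists i; move/setP/(_ i): iJI; rewrite set11 inE => /andP[].
Qed.

Lemma JH_mem_vertex V E J i :
  is_hypergraph V E -> J \in JH V E -> i \in J -> exists2 I, I \in V & i \in I.
Proof.
move=> hH /bigcupP[e he]; have /subsetP sV := hyperedge_subset hH he.
rewrite inE => /andP[/subsetP sJ _] /sJ /bigcupP[I Ie iI].
by exists I; first exact: sV.
Qed.

Lemma set1_JH V E I i : I \in V -> i \in I -> [set i] \in JH V E.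
Proof.
move=> IV iI; apply/bigcupP; exists [set I]; first by rewrite inE imset_f.
rewrite inE big_set1 sub1set iI; apply/forall_inP => I'; rewrite inE => /eqP->.
by rewrite (setIidPl _) ?cards1 // sub1set.
Qed.

Lemma JH_set1 V E J i :
  is_hypergraph V E -> J \in JH V E -> i \in J -> [set i] \in JH V E.
Proof. by move=> hH hJ /(JH_mem_vertex hH hJ)[I IV iI]; apply: set1_JH iI. Qed.

Lemma hypergraph_vertex_eq V E I1 I2 i :
  is_hypergraph V E -> I1 \in V -> I2 \in V -> i \in I1 -> i \in I2 -> I1 = I2.
Proof.
move=> [_ [hd _]] I1V I2V iI1 iI2; apply/eqP; apply: contraTT iI2 => ne.
by rewrite (disjointFr (hd _ _ I1V I2V ne) iI1).
Qed.

End IndexSets.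

Section MultilinearPoints.
Variables (R : realType) (n : nat).
Implicit Types (V : {set {set 'I_n}}) (E : {set {set {set 'I_n}}})
  (e : {set {set 'I_n}}) (I J : {set 'I_n}) (i j : 'I_n) (p q : {set 'I_n} -> R).

Section OnePoint.
Variables (V : {set {set 'I_n}}) (E : {set {set {set 'I_n}}}) (p : {set 'I_n} -> R).
Hypothesis hp : SH V E p.

Lemma SH_01 J : p J = 0 \/ p J = 1.
Proof.
have [hs [hb _]] := hp; have [/hb//|/hs->] := boolP (J \in JH V E).
by left.
Qed.

Lemma SH_ge0 J : 0 <= p J.
Proof. by have [->|->] := SH_01 J. Qed.

Lemma SH_prod J :
  is_hypergraph V E -> J \in JH V E -> p J = \prod_(i in J) p [set i].
Proof.
move=> hH hJ; have [_ [_ [_ hprod]]] := hp.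
have [/hprod->//|] := ltnP 1 #|J|.
rewrite leq_eqVlt ltnS leqn0 cards_eq0 (negbTE (JH_neq0 hH hJ)) orbF.
by case/cards1P=> i ->; rewrite big_set1.
Qed.

Lemma SH_vertex_one I : I \in V -> exists2 i, i \in I & p [set i] = 1.
Proof.
move=> IV; have [_ [_ [hsum _]]] := hp.
have [/exists_inP[i iI /eqP pi1]|none] := boolP [exists i in I, p [set i] == 1].
  by exists i.
move: (hsum I IV); rewrite big1 => [/esym/eqP|i iI]; first by rewrite oner_eq0.
have [//|pi1] := SH_01 [set i]; case/negP: none; apply/exists_inP.
by exists i; rewrite ?pi1.
Qed.

Lemma SH_vertex_unique I i j :
  I \in V -> i \in I -> p [set i] = 1 -> j \in I -> j != i -> p [set j] = 0.
Proof.
move=> IV iI pi1 jI ji; have [_ [_ [hsum _]]] := hp.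
move: (hsum I IV); rewrite (bigD1 i) //= pi1 -[X in _ = X]addr0 => /addrI h.
by apply: (psumr_eq0P _ h) => [k _|]; [apply: SH_ge0 | rewrite jI ji].
Qed.

End OnePoint.

Lemma SH_proj V E V1 E1 p :
  is_hypergraph V1 E1 -> V1 \subset V -> E1 \subset E ->
  SH V E p -> SH V1 E1 (proj V1 E1 p).
Proof.
move=> hH1 sV sE [hs [hb [hsum hprod]]]; have /subsetP sJ := JH_subset sV sE.
split; [|split; [|split]].
- by move=> J /negbTE hJ; rewrite /proj hJ.
- by move=> J hJ; rewrite /proj hJ; apply/hb/sJ.
- move=> I IV; rewrite -(hsum I (subsetP sV _ IV)); apply: eq_bigr => i iI.
  by rewrite /proj (set1_JH E1 IV iI).
- move=> J hJ c; rewrite /proj hJ hprod ?sJ //; apply: eq_bigr => i iJ.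
  by rewrite (JH_set1 hH1 hJ iJ).
Qed.

Definition monomial_point V E (x : 'I_n -> R) J : R :=
  if J \in JH V E then \prod_(i in J) x i else 0.

Lemma monomial_point_SH V E (x : 'I_n -> R) :
  is_hypergraph V E -> (forall i, x i = 0 \/ x i = 1) ->
  (forall I, I \in V -> \sum_(i in I) x i = 1) -> SH V E (monomial_point V E x).
Proof.
move=> hH x01 xsum.
have mp1 J i : J \in JH V E -> i \in J -> monomial_point V E x [set i] = x i.
  by move=> hJ iJ; rewrite /monomial_point (JH_set1 hH hJ iJ) big_set1.
split; [|split; [|split]].
- by move=> J /negbTE hJ; rewrite /monomial_point hJ.
- move=> J hJ; rewrite /monomial_point hJ.
  apply: (big_ind (fun v => v = 0 \/ v = 1)) => [|a b [->|->] [->|->]|i _];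
    rewrite ?mul0r ?mulr0 ?mulr1; by [left | right | apply: x01].
- move=> I IV; rewrite -(xsum I IV); apply: eq_bigr => i iI.
  by rewrite /monomial_point (set1_JH E IV iI) big_set1.
- move=> J hJ _; rewrite {1}/monomial_point hJ.
  by apply: eq_bigr => i iJ; rewrite (mp1 J).
Qed.

Definition selected e p : {set 'I_n} := [set i in cover e | p [set i] == 1].

Definition agree_on e p q : bool := [forall i in cover e, p [set i] == q [set i]].

Lemma agree_on_refl e p : agree_on e p p.
Proof. exact/forall_inP. Qed.

Lemma agree_onC e p q : agree_on e p q = agree_on e q p.
Proof. by apply/forall_inP/forall_inP => h i /h; rewrite eq_sym. Qed.

Lemma agree_on_selected e p q : agree_on e p q -> selected e p = selected e q.
Proof.
move/forall_inP=> h; apply/setP => i; rewrite !inE.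
by have [/h/eqP->|] := boolP (i \in cover e).
Qed.

Lemma selected_Je V E e p : e \subset V -> SH V E p -> selected e p \in Je e.
Proof.
move=> /subsetP sV hp; rewrite inE; apply/andP; split.
  by apply/subsetP => i; rewrite inE => /andP[].
apply/forall_inP => I Ie; have [i iI pi1] := SH_vertex_one hp (sV _ Ie).
apply/cards1P; exists i; apply/setP => j; rewrite !inE.
have [->|ji] := eqVneq j i.
  by rewrite pi1 eqxx iI !andbT; apply/bigcupP; exists I.
have [jI|] := boolP (j \in I); last by rewrite andbF.
by rewrite (SH_vertex_unique hp (sV _ Ie) iI pi1 jI ji) eq_sym oner_eq0 andbF.
Qed.

Lemma SH_selected V1 E1 V2 E2 e p q :
  is_hypergraph V2 E2 -> e \subset V1 -> e \in Lv V2 :|: E2 ->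
  SH V1 E1 p -> SH V2 E2 q -> q (selected e p) = (agree_on e p q)%:R.
Proof.
move=> hH2 sV1 he hp hq; have /subsetP s1 := sV1.
have /subsetP s2 := hyperedge_subset hH2 he.
have hJ : selected e p \in JH V2 E2.
  by apply: (subsetP (Je_sub_JH he)); apply: selected_Je sV1 hp.
rewrite (SH_prod hq hH2 hJ); have [/forall_inP agr|] := boolP (agree_on e p q).
  by rewrite big1 // => i; rewrite inE => /andP[/agr/eqP<- /eqP].
rewrite negb_forall_in => /exists_inP[i /bigcupP[I Ie iI] pq].
have [i0 i0I pi0] := SH_vertex_one hp (s1 _ Ie).
have qi0 : q [set i0] = 0.
  have [//|qi0] := SH_01 hq [set i0]; case/negP: pq.
  have [->|ii0] := eqVneq i i0; first by rewrite pi0 qi0.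
  rewrite (SH_vertex_unique hp _ i0I pi0 iI ii0) ?s1 //.
  by rewrite (SH_vertex_unique hq _ i0I qi0 iI ii0) ?s2.
by rewrite (bigD1 i0) /= ?qi0 ?mul0r // inE pi0 eqxx andbT; apply/bigcupP; exists I.
Qed.

End MultilinearPoints.

Section ConvexCombinations.
Variable R : realType.

Lemma conv_fin (T : Type) (A : finType) (P : (T -> R) -> Prop) (lam : A -> R)
    (p : A -> T -> R) (w : T -> R) :
  (forall a, 0 <= lam a) -> \sum_a lam a = 1 -> (forall a, P (p a)) ->
  (forall x, w x = \sum_a lam a * p a x) -> conv P w.
Proof.
move=> lam0 lam1 hP hw.
have reindex_enum (F : A -> R) : \sum_a F a = \sum_(j < #|A|) F (enum_val j).
  by rewrite (reindex (@enum_val A xpredT)) //; apply/onW_bij/enum_val_bij.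
exists #|A|, (fun j => lam (enum_val j)), (fun j => p (enum_val j)).
split=> //; split; first by rewrite -lam1 reindex_enum.
by split=> // x; rewrite hw reindex_enum.
Qed.

Lemma conv_coef_le (A : finType) (lam x : A -> R) a :
  (forall c, 0 <= lam c) -> (forall c, 0 <= x c) -> x a = 1 ->
  lam a <= \sum_c lam c * x c.
Proof.
move=> lam0 x0 xa1; rewrite (bigD1 a) //= xa1 mulr1 lerDl.
by apply: sumr_ge0 => c _; apply: mulr_ge0.
Qed.

Lemma mulr_divK_le (x y : R) : 0 <= x -> x <= y -> x * y / y = x.
Proof.
move=> x0 xy; have [y0|/mulfK//] := eqVneq y 0.
have -> : x = 0 by apply/eqP; rewrite eq_le x0 andbT -y0.
by rewrite !mul0r.
Qed.

End ConvexCombinations.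

Lemma MC_proj (R : realType) n (V V1 : {set {set 'I_n}})
    (E E1 : {set {set {set 'I_n}}}) (w : {set 'I_n} -> R) :
  is_hypergraph V1 E1 -> V1 \subset V -> E1 \subset E ->
  MC V E w -> MC V1 E1 (proj V1 E1 w).
Proof.
move=> hH1 sV sE [k [lam [p [lam0 [lam1 [hp hw]]]]]].
exists k, lam, (fun a => proj V1 E1 (p a)); do 2!split=> //.
split=> [a|J]; first exact: SH_proj (hp a).
rewrite /proj; case: ifP => _; first exact: hw.
by rewrite big1 // => a _; rewrite mulr0.
Qed.

Section Gluing.
Variables (R : realType) (n : nat) (V1 V2 : {set {set 'I_n}})
  (E1 E2 : {set {set {set 'I_n}}}).
Hypotheses (hH : is_hypergraph (V1 :|: V2) (E1 :|: E2))
  (hH1 : is_hypergraph V1 E1) (hH2 : is_hypergraph V2 E2)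
  (he1 : V1 :&: V2 \in Lv V1 :|: E1) (he2 : V1 :&: V2 \in Lv V2 :|: E2).
Local Notation e0 := (V1 :&: V2).

Variables (A B : finType) (lam : A -> R) (mu : B -> R)
  (p : A -> {set 'I_n} -> R) (q : B -> {set 'I_n} -> R) (w : {set 'I_n} -> R).
Hypotheses (lam_ge0 : forall a, 0 <= lam a) (mu_ge0 : forall b, 0 <= mu b)
  (hp : forall a, SH V1 E1 (p a)) (hq : forall b, SH V2 E2 (q b))
  (hw1 : forall J, J \in JH V1 E1 -> w J = \sum_a lam a * p a J)
  (hw2 : forall J, J \in JH V2 E2 -> w J = \sum_b mu b * q b J).

Lemma mem_cover_V1 I i : I \in V1 :|: V2 -> i \in I -> (i \in cover V1) = (I \in V1).
Proof.
move=> IV iI; apply/bigcupP/idP => [[I1 I1V iI1]|IV1]; last by exists I.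
by rewrite -(hypergraph_vertex_eq hH _ IV iI1 iI) // inE I1V.
Qed.

Lemma selected_p_JH2 a : selected e0 (p a) \in JH V2 E2.
Proof. by apply/(subsetP (Je_sub_JH he2))/(selected_Je (subsetIl _ _) (hp a)). Qed.

Lemma selected_q_JH1 b : selected e0 (q b) \in JH V1 E1.
Proof. by apply/(subsetP (Je_sub_JH he1))/(selected_Je (subsetIr _ _) (hq b)). Qed.

Lemma q_selected_p a b : q b (selected e0 (p a)) = (agree_on e0 (p a) (q b))%:R.
Proof. exact: SH_selected hH2 (subsetIl _ _) he2 (hp a) (hq b). Qed.

Lemma p_selected_q a b : p a (selected e0 (q b)) = (agree_on e0 (p a) (q b))%:R.
Proof. by rewrite agree_onC; apply: SH_selected hH1 (subsetIr _ _) he1 (hq b) (hp a). Qed.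

Lemma lam_le_w_selected a : lam a <= w (selected e0 (p a)).
Proof.
have hJ := selected_Je (subsetIl V1 V2) (hp a).
rewrite hw1 ?(subsetP (Je_sub_JH he1)) //.
apply: conv_coef_le => [c|c|/=]; [exact: lam_ge0 | exact: SH_ge0 (hp c) _ |].
by rewrite (SH_selected hH1 (subsetIl _ _) he1 (hp a) (hp a)) agree_on_refl.
Qed.

Lemma mu_le_w_selected b : mu b <= w (selected e0 (q b)).
Proof.
have hJ := selected_Je (subsetIr V1 V2) (hq b).
rewrite hw2 ?(subsetP (Je_sub_JH he2)) //.
apply: conv_coef_le => [c|c|/=]; [exact: mu_ge0 | exact: SH_ge0 (hq c) _ |].
by rewrite (SH_selected hH2 (subsetIr _ _) he2 (hq b) (hq b)) agree_on_refl.
Qed.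

(* If w (selected e0 (p a)) = 0 then lam a = 0 too, so the junk value x / 0 = 0
   does no harm (see mulr_divK_le). *)
Definition glue_weight a b : R :=
  lam a * mu b * (agree_on e0 (p a) (q b))%:R / w (selected e0 (p a)).

Lemma glue_weight_eq0 a b : ~~ agree_on e0 (p a) (q b) -> glue_weight a b = 0.
Proof. by move/negbTE; rewrite /glue_weight => ->; rewrite mulr0 mul0r. Qed.

Lemma glue_weightE a b :
  glue_weight a b = lam a * mu b * (agree_on e0 (p a) (q b))%:R / w (selected e0 (q b)).
Proof.
rewrite /glue_weight; have [/agree_on_selected->//|_] := boolP (agree_on e0 (p a) (q b)).
by rewrite !mulr0 !mul0r.
Qed.

Lemma glue_weight_ge0 a b : 0 <= glue_weight a b.
Proof.
rewrite /glue_weight !mulr_ge0 ?ler0n ?invr_ge0 //.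
exact: le_trans (lam_le_w_selected a).
Qed.

Lemma sum_glue_weight_r a : \sum_b glue_weight a b = lam a.
Proof.
rewrite -[RHS](mulr_divK_le _ (lam_le_w_selected a)) //.
rewrite [X in lam a * X]hw2 ?selected_p_JH2 //.
rewrite mulr_sumr mulr_suml; apply: eq_bigr => b _.
by rewrite /glue_weight q_selected_p mulrA.
Qed.

Lemma sum_glue_weight_l b : \sum_a glue_weight a b = mu b.
Proof.
rewrite -[RHS](mulr_divK_le _ (mu_le_w_selected b)) //.
rewrite [X in mu b * X]hw1 ?selected_q_JH1 //.
rewrite mulr_sumr mulr_suml; apply: eq_bigr => a _.
by rewrite glue_weightE p_selected_q mulrA [mu b * lam a]mulrC.
Qed.

Definition glue_point a b : {set 'I_n} -> R :=
  monomial_point (V1 :|: V2) (E1 :|: E2)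
    (fun i => if i \in cover V1 then p a [set i] else q b [set i]).

Lemma glue_point_SH a b : SH (V1 :|: V2) (E1 :|: E2) (glue_point a b).
Proof.
apply: monomial_point_SH => // [i|I IV].
  by case: ifP => _; [exact: SH_01 (hp a) _ | exact: SH_01 (hq b) _].
have [IV1|IV1] := boolP (I \in V1).
  have [_ [_ [hsum _]]] := hp a; rewrite -(hsum I IV1); apply: eq_bigr => i iI.
  by rewrite (mem_cover_V1 IV iI) IV1.
have IV2 : I \in V2 by move: IV; rewrite inE (negbTE IV1).
have [_ [_ [hsum _]]] := hq b; rewrite -(hsum I IV2); apply: eq_bigr => i iI.
by rewrite (mem_cover_V1 IV iI) (negbTE IV1).
Qed.

Lemma glue_point_JH1 a b J : J \in JH V1 E1 -> glue_point a b J = p a J.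
Proof.
move=> hJ; rewrite /glue_point /monomial_point JH_setU inE hJ (SH_prod (hp a) hH1 hJ).
apply: eq_bigr => i iJ; have [I IV1 iI] := JH_mem_vertex hH1 hJ iJ.
by rewrite (mem_cover_V1 _ iI) ?inE IV1.
Qed.

Lemma glue_point_JH2 a b J :
  J \in JH V2 E2 -> agree_on e0 (p a) (q b) -> glue_point a b J = q b J.
Proof.
move=> hJ /forall_inP agr.
rewrite /glue_point /monomial_point JH_setU inE hJ orbT (SH_prod (hq b) hH2 hJ).
apply: eq_bigr => i iJ; have [I IV2 iI] := JH_mem_vertex hH2 hJ iJ.
have IV : I \in V1 :|: V2 by rewrite inE IV2 orbT.
rewrite (mem_cover_V1 IV iI); case: ifP => // IV1.
by apply/eqP/agr/bigcupP; exists I; rewrite ?inE ?IV1.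
Qed.

Lemma MC_glue :
  \sum_a lam a = 1 -> supported (V1 :|: V2) (E1 :|: E2) w ->
  MC (V1 :|: V2) (E1 :|: E2) w.
Proof.
move=> lam1 hw.
have sum_pair (G : A * B -> R) : \sum_t G t = \sum_a \sum_b G (a, b).
  by rewrite pair_big; apply: eq_bigr => [[]].
apply: (@conv_fin _ _ _ _ (fun t => glue_weight t.1 t.2)
                          (fun t => glue_point t.1 t.2)) => [t|||J].
- exact: glue_weight_ge0.
- by rewrite sum_pair -lam1; apply: eq_bigr => a _; apply: sum_glue_weight_r.
- by move=> t; apply: glue_point_SH.
rewrite sum_pair /=; have [hJ1|hJ1] := boolP (J \in JH V1 E1).
  rewrite hw1 //; apply: eq_bigr => a _.
  under eq_bigr do rewrite glue_point_JH1 //.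
  by rewrite -mulr_suml sum_glue_weight_r.
have [hJ2|hJ2] := boolP (J \in JH V2 E2).
  rewrite hw2 // exchange_big; apply: eq_bigr => b _.
  rewrite -(sum_glue_weight_l b) mulr_suml; apply: eq_bigr => a _.
  have [agr|/glue_weight_eq0->] := boolP (agree_on e0 (p a) (q b)).
    by rewrite glue_point_JH2.
  by rewrite !mul0r.
have hJ : J \notin JH (V1 :|: V2) (E1 :|: E2) by rewrite JH_setU inE negb_or hJ1.
rewrite hw //; symmetry; apply: big1 => a _; apply: big1 => b _.
by rewrite /= /glue_point /monomial_point (negbTE hJ) mulr0.
Qed.

End Gluing.

Unset Implicit Arguments.
Set Strict Implicit.

Theorem theorem4p2 (R : realType) (n : nat)
    (V : {set {set 'I_n}}) (E : {set {set {set 'I_n}}})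
    (V1 : {set {set 'I_n}}) (E1 : {set {set {set 'I_n}}})
    (V2 : {set {set 'I_n}}) (E2 : {set {set {set 'I_n}}}) :
  (0 < n)%N -> is_hypergraph V E -> is_hypergraph V1 E1 -> is_hypergraph V2 E2 ->
  V = V1 :|: V2 -> E = E1 :|: E2 ->
  V1 :&: V2 \in (Lv V1 :|: E1) :&: (Lv V2 :|: E2) ->
  forall w : {set 'I_n} -> R, supported V E w ->
    (MC V E w <-> MC V1 E1 (proj V1 E1 w) /\ MC V2 E2 (proj V2 E2 w)).
Proof.
move=> _ hH hH1 hH2 eV eE; subst V E => /setIP[he1 he2] w hw; split.
  by move=> hMC; split; apply: MC_proj hMC; rewrite ?subsetUl ?subsetUr.
case=> [[k1 [lam [p [lam0 [lam1 [hp hw1]]]]]] [k2 [mu [q [mu0 [_ [hq hw2]]]]]]].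
apply: (MC_glue hH hH1 hH2 he1 he2 lam0 mu0 hp hq _ _ lam1 hw) => J hJ.
  by rewrite -hw1 /proj hJ.
by rewrite -hw2 /proj hJ.
Qed.
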